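(* For every $n\ge 4$, $W(n)\le \frac34 n+1$.
   Context: Graphs are finite simple graphs viewed as structures with adjacency relation $E$ and equality; $\chi(G)$ is the chromatic number and $K_3$ the complete graph on 3 vertices. For a graph $G$ with $\chi(G)>3$, $W(G)$ is the least $k$ such that some existential-positive first-order sentence (built from atomic formulas $x=y$, $E(x,y)$ using only $\wedge$, $\vee$ and $\exists$) in which at most $k$ distinct variables occur is true in $G$ and false in $K_3$. $W(n)=\max\{W(G): |V(G)|=n,\ \chi(G)>3\}$. *)

From mathcomp Require Import all_boot.
Set Implicit Arguments. Unset Strict Implicit. Unset Printing Implicit Defensive.

Definition simple_graph (T : finType) (e : rel T) : Prop :=
  (forall x y, e x y = e y x) /\ (forall x, ~~ e x x).

Definition colorable (T : finType) (e : rel T) (k : nat) : Prop :=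
  exists f : T -> 'I_k, forall x y, e x y -> f x != f y.

Definition chi_gt (T : finType) (e : rel T) (m : nat) : Prop :=
  forall k, colorable e k -> m < k.

Definition K3 : rel 'I_3 := fun x y => x != y.

(* Existential-positive first-order formulas over {E, =}; variables are nats. *)
Inductive epf : Type :=
| FEq : nat -> nat -> epf
| FE : nat -> nat -> epf
| FAnd : epf -> epf -> epf
| FOr : epf -> epf -> epf
| FEx : nat -> epf -> epf.

Fixpoint vars (f : epf) : seq nat :=
  match f with
  | FEq i j | FE i j => [:: i; j]
  | FAnd f1 f2 | FOr f1 f2 => vars f1 ++ vars f2
  | FEx i g => i :: vars g
  end.

Definition nvars (f : epf) : nat := size (undup (vars f)).

Fixpoint free_vars (f : epf) : seq nat :=
  match f with
  | FEq i j | FE i j => [:: i; j]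
  | FAnd f1 f2 | FOr f1 f2 => free_vars f1 ++ free_vars f2
  | FEx i g => filter (fun j => j != i) (free_vars g)
  end.

Definition sentence (f : epf) : Prop := free_vars f = [::].

Definition upd (T : Type) (a : nat -> T) (i : nat) (x : T) : nat -> T :=
  fun j => if j == i then x else a j.

Fixpoint eval (T : finType) (e : rel T) (a : nat -> T) (f : epf) : Prop :=
  match f with
  | FEq i j => a i = a j
  | FE i j => e (a i) (a j)
  | FAnd f1 f2 => eval e a f1 /\ eval e a f2
  | FOr f1 f2 => eval e a f1 \/ eval e a f2
  | FEx i g => exists x : T, eval e (upd a i x) g
  end.

(* truth of a sentence in a structure (the assignment is irrelevant) *)
Definition holds (T : finType) (e : rel T) (f : epf) : Prop :=
  forall a : nat -> T, eval e a f.

(* W(G) <= k : some ep-sentence with at most k distinct variables is true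
   in G and false in K3 (unfolding of "the least such k is <= k"). *)
Definition W_le (T : finType) (e : rel T) (k : nat) : Prop :=
  exists f : epf, [/\ sentence f, nvars f <= k, holds e f & ~ holds K3 f].

From mathcomp Require Import all_boot zify.
Set Implicit Arguments. Unset Strict Implicit. Unset Printing Implicit Defensive.

(* Let G be a graph on n vertices that is not 3-colourable.  By finiteness it
   contains a vertex-critical non-3-colourable vertex set S: removing any
   vertex v makes S 3-colourable.  The largest colour class I of a 3-colouring
   of S \ v is independent in G and has |S| <= 3|I| + 1.

   With X := S \ I, consider the existential-positive sentence
       exists z (x_u)_(u in X),  /\_(uw edge of G[X]) E(x_u, x_w)
                               /\ /\_(w in I) exists z, /\_(u in N(w) cap X) E(x_u, z),
   which uses |X| + 1 variables (one per vertex of X plus a reusable z).  It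
   holds in G (take x_u := u and z := w), and if it held in K3 the values of
   the x_u would 3-colour G[X] in such a way that each w in I still has a free
   colour, i.e. S = I u X would be 3-colourable.  Hence
   W(G) <= |S| - |I| + 1 <= (2|S| + 1)/3 + 1 <= 3n/4 + 1, as |S| <= n and n >= 4.
*)

Section ThreeColourings.
Variables (T : finType) (e : rel T).

Definition col3 (S : {set T}) : bool :=
  [exists c : {ffun T -> 'I_3},
     [forall x in S, forall y in S, e x y ==> (c x != c y)]].

Lemma col3P (S : {set T}) :
  reflect (exists c : T -> 'I_3, forall x y, x \in S -> y \in S -> e x y -> c x != c y)
          (col3 S).
Proof.
apply: (iffP existsP) => [[c /forallP Hc]|[c Hc]].
  exists c => x y xS yS exy.
  by have /implyP/(_ xS)/forall_inP/(_ y yS)/implyP := Hc x; apply.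
exists [ffun x => c x]; apply/forall_inP => x xS; apply/forall_inP => y yS.
by apply/implyP => exy; rewrite !ffunE Hc.
Qed.

Lemma col3_set0 : col3 set0.
Proof. by apply/col3P; exists (fun _ => ord0) => x y; rewrite inE. Qed.

Lemma chi_gt3_not_col3 : chi_gt e 3 -> ~~ col3 setT.
Proof.
move=> chi; apply/col3P => -[c Hc].
suff : 3 < 3 by rewrite ltnn.
by apply: chi; exists c => x y; apply: Hc; rewrite inE.
Qed.

Lemma critical_subset (S0 : {set T}) : ~~ col3 S0 ->
  exists2 S, ~~ col3 S & forall v, v \in S -> col3 (S :\ v).
Proof.
move=> nS0; have [S /minsetP [nS minS] _] := @minset_exists _ (fun S => ~~ col3 S) _ nS0.
exists S => // v vS; apply: contraT => nSv.
by have := properD1 vS; rewrite (minS _ nSv (subD1set S v)) properxx.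
Qed.

Lemma large_colour_class (A : {set T}) (c : T -> 'I_3) :
  exists i, #|A| <= 3 * #|[set u in A | c u == i]|.
Proof.
pose C i := [set u in A | c u == i].
pose i0 := @Ordinal 3 0 isT; pose i1 := @Ordinal 3 1 isT; pose i2 := @Ordinal 3 2 isT.
have cover : A \subset C i0 :|: C i1 :|: C i2.
  by apply/subsetP => u uA; rewrite !inE uA; case: (c u) => [[|[|[|m]]] ?].
have := subset_leq_card cover; rewrite !cardsU.
case: (leqP #|A| (3 * #|C i0|)) => [|g0]; first by exists i0.
case: (leqP #|A| (3 * #|C i1|)) => [|g1]; first by exists i1.
case: (leqP #|A| (3 * #|C i2|)) => [|g2]; first by exists i2.
lia.
Qed.

Definition independent (I : {set T}) : Prop :=
  forall x y, x \in I -> y \in I -> ~~ e x y.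

(* A non-3-colourable graph contains a non-3-colourable S and an independent
   I \subset S of size at least (|S| - 1)/3: a colour class of S :\ v. *)
Lemma large_independent_in_critical (S0 : {set T}) : ~~ col3 S0 ->
  exists S I : {set T},
    [/\ ~~ col3 S, I \subset S, independent I & #|S| <= 3 * #|I| + 1].
Proof.
move=> /critical_subset [S nS critS].
have [v vS] : exists v, v \in S.
  by apply/set0Pn; apply: contraNneq nS => ->; apply: col3_set0.
have /col3P [c Hc] := critS v vS.
have [i large] := large_colour_class (S :\ v) c.
exists S, [set u in S :\ v | c u == i]; split=> //.
- by apply/subsetP => u; rewrite !inE => /andP [/andP [_ ->]].
- move=> x y /setIdP [xSv /eqP cx] /setIdP [ySv /eqP cy].
  by apply/negP => /(Hc x y xSv ySv); rewrite cx cy eqxx.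
- by move: large; rewrite (cardsD1 v S) vS; lia.
Qed.

End ThreeColourings.

(* Conjunction of a list of formulas; the empty conjunction is the true
   atom t = t. *)
Definition big_and (t : nat) (fs : seq epf) : epf := foldr FAnd (FEq t t) fs.

Definition ex_block (xs : seq nat) (f : epf) : epf := foldr FEx f xs.

Lemma vars_big_and t (A : eqType) (F : A -> epf) (s : seq A) x :
  x \in vars (big_and t [seq F y | y <- s]) ->
  x = t \/ exists2 y, y \in s & x \in vars (F y).
Proof.
elim: s => [|y s IH] /=; first by rewrite !inE orbb => /eqP; left.
rewrite mem_cat => /orP [Fy|/IH [->|[z zs Fz]]]; [right; exists y | left | right; exists z] => //.
- by rewrite mem_head.
- by rewrite inE zs orbT.
Qed.

Lemma vars_ex_block xs f : vars (ex_block xs f) = xs ++ vars f.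
Proof. by elim: xs => //= j xs ->. Qed.

Lemma free_vars_ex_block xs f x :
  (x \in free_vars (ex_block xs f)) = (x \notin xs) && (x \in free_vars f).
Proof.
elim: xs => [|j xs IH] //=.
by rewrite mem_filter IH inE negb_or andbA.
Qed.

Lemma free_vars_vars f : {subset free_vars f <= vars f}.
Proof.
elim: f => [i j|i j|f1 IH1 f2 IH2|f1 IH1 f2 IH2|i g IH] x //=;
  rewrite ?mem_cat ?mem_filter ?inE.
- by case/orP => [/IH1|/IH2] ->; rewrite ?orbT.
- by case/orP => [/IH1|/IH2] ->; rewrite ?orbT.
- by case/andP => _ /IH ->; rewrite orbT.
Qed.

Section Semantics.
Variables (T : finType) (e : rel T).

Lemma eval_big_and a t (A : eqType) (F : A -> epf) (s : seq A) :
  eval e a (big_and t [seq F y | y <- s]) <-> {in s, forall y, eval e a (F y)}.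
Proof.
elim: s => [|y s IH] /=; first by [].
split=> [[Fy /IH Fs] z|Fs]; first by rewrite inE => /predU1P [->|/Fs].
by split; [apply: Fs; rewrite mem_head | apply/IH => z zs; apply: Fs; rewrite inE zs orbT].
Qed.

Lemma eval_ext a b f : a =1 b -> eval e a f <-> eval e b f.
Proof.
elim: f a b => [i j|i j|f1 IH1 f2 IH2|f1 IH1 f2 IH2|i g IH] a b ab /=.
- by rewrite !ab.
- by rewrite !ab.
- by rewrite (IH1 a b) // (IH2 a b).
- by rewrite (IH1 a b) // (IH2 a b).
- have abx x : upd a i x =1 upd b i x by move=> j; rewrite /upd ab.
  by split=> -[x Hx]; exists x; apply/(IH _ _ (abx x)).
Qed.

Lemma ex_block_intro a (g : nat -> T) xs f :
  eval e (fun j => if j \in xs then g j else a j) f -> eval e a (ex_block xs f).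
Proof.
elim: xs a => [|j xs IH] a /= Hf; first exact: Hf.
exists (g j); apply: IH.
have same : (fun k => if k \in j :: xs then g k else a k) =1
            (fun k => if k \in xs then g k else upd a j (g j) k).
  by move=> k; rewrite /upd inE; case: (k =P j) => [->|_]; case: (_ \in xs).
exact/(eval_ext _ same).
Qed.

Lemma ex_block_elim a xs f : eval e a (ex_block xs f) -> exists b, eval e b f.
Proof. by elim: xs a => [|j xs IH] a /=; [exists a | case=> x /IH]. Qed.

End Semantics.

Section CoverSentence.
Variables (n : nat) (e : rel 'I_n) (X I : {set 'I_n}).

(* Vertex u of X is represented by the variable val u; the variable n is
   fresh and plays the role of z. *)

Definition edge_part : epf :=
  big_and n [seq big_and n [seq FE u w | w : 'I_n <- enum X & e u w] | u : 'I_n <- enum X].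

Definition witness_part : epf :=
  big_and n [seq FEx n (big_and n [seq FE u n | u : 'I_n <- enum X & e u w]) | w : 'I_n <- enum I].

(* The separating sentence, z being quantified outermost as well. *)
Definition cover_sentence : epf :=
  ex_block (n :: [seq val u | u <- enum X]) (FAnd edge_part witness_part).

Lemma vars_cover_body x : x \in vars (FAnd edge_part witness_part) ->
  (x == n) || (x \in [seq val u | u <- enum X]).
Proof.
have inX u : u \in enum X -> val u \in [seq val u | u <- enum X] by apply: map_f.
rewrite /= mem_cat => /orP [].
- case/vars_big_and => [->|[u uX]]; first by rewrite eqxx.
  case/vars_big_and => [->|[w]]; first by rewrite eqxx.
  rewrite mem_filter => /andP [_ wX].
  by rewrite !inE => /orP [] /eqP ->; rewrite ?inX ?orbT.
- case/vars_big_and => [->|[w _]]; first by rewrite eqxx.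
  rewrite /= inE => /predU1P [->|]; first by rewrite eqxx.
  case/vars_big_and => [->|[u]]; first by rewrite eqxx.
  rewrite mem_filter => /andP [_ uX].
  by rewrite !inE => /orP [] /eqP ->; rewrite ?inX ?eqxx ?orbT.
Qed.

Lemma cover_sentence_closed : sentence cover_sentence.
Proof.
rewrite /sentence; case E: (free_vars _) => [//|x s].
have : x \in free_vars cover_sentence by rewrite E mem_head.
rewrite free_vars_ex_block inE negb_or => /andP [/andP [xn xX] /free_vars_vars].
by move/vars_cover_body; rewrite (negbTE xn) (negbTE xX).
Qed.

Lemma nvars_cover_sentence : nvars cover_sentence <= #|X|.+1.
Proof.
rewrite /nvars; apply: (@leq_trans (size (n :: [seq val u | u <- enum X]))).
  apply: uniq_leq_size; first exact: undup_uniq.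
  move=> x; rewrite mem_undup vars_ex_block mem_cat.
  by case/orP => // /vars_cover_body; rewrite inE.
by rewrite /= size_map -cardE.
Qed.

Lemma val_neq_n (u : 'I_n) : (val u == n) = false.
Proof. exact: ltn_eqF (ltn_ord u). Qed.

(* G satisfies the sentence: interpret each x_u by u itself and, for w in I,
   the existential z by w. *)
Lemma holds_cover_sentence : holds e cover_sentence.
Proof.
move=> a; apply: (ex_block_intro (g := insubd (a 0))).
set b := (B in eval _ B _).
have bX u : u \in enum X -> b (val u) = u.
  by move=> uX; rewrite /b inE map_f ?orbT // valKd.
split.
- apply/eval_big_and => u uX; apply/eval_big_and => w.
  by rewrite mem_filter => /andP [euw wX] /=; rewrite !bX.
- apply/eval_big_and => w wI /=; exists w; apply/eval_big_and => u.
  by rewrite mem_filter => /andP [euw uX] /=; rewrite /upd val_neq_n eqxx bX.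
Qed.

(* If K3 satisfies the sentence, the values of x_u 3-colour G[X], and each w
   in I sees at most two colours on its neighbours in X, so the colouring
   extends to I :|: X (I being independent). *)
Lemma cover_sentence_K3 : symmetric e -> independent e I ->
  holds K3 cover_sentence -> col3 e (I :|: X).
Proof.
move=> esym indI /(_ (fun _ => ord0)) /ex_block_elim [b [Hedge Hwit]].
have edgeX u w : u \in X -> w \in X -> e u w -> b u != b w.
  move=> uX wX euw; move/eval_big_and: Hedge => /(_ u); rewrite mem_enum.
  by move=> /(_ uX) /eval_big_and; apply; rewrite mem_filter mem_enum euw.
pose avoids w y := [forall u in X, e u w ==> (b (val u) != y)].
have avoidsE w y u : avoids w y -> u \in X -> e u w -> b u != y.
  by move=> /forall_inP /(_ u) H /H /implyP.
have witI w : w \in I -> exists y, avoids w y.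
  move=> wI; move/eval_big_and: Hwit => /(_ w); rewrite mem_enum => /(_ wI) [y Hy].
  exists y; apply/forall_inP => u uX; apply/implyP => euw.
  move/eval_big_and: Hy => /(_ u); rewrite mem_filter mem_enum euw uX => /(_ isT).
  by rewrite /= /K3 /upd eqxx val_neq_n.
pose wit w := odflt ord0 [pick y | avoids w y].
have wit_avoids w : w \in I -> avoids w (wit w).
  by move=> /witI [y Hy]; rewrite /wit; case: pickP => [//|/(_ y)]; rewrite Hy.
apply/col3P; exists (fun v => if v \in X then b (val v) else wit v) => x y.
rewrite !inE; case xX: (x \in X); case yX: (y \in X); rewrite ?orbF ?orbT => xI yI exy.
- exact: edgeX.
- exact: avoidsE (wit_avoids _ yI) xX exy.
- by rewrite eq_sym; apply: avoidsE (wit_avoids _ xI) yX _; rewrite esym.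
- by move: (indI x y xI yI); rewrite exy.
Qed.

End CoverSentence.

Lemma W_le_independent n (e : rel 'I_n) (S I : {set 'I_n}) :
  symmetric e -> ~~ col3 e S -> I \subset S -> independent e I ->
  W_le e #|S :\: I|.+1.
Proof.
move=> esym nS sIS indI; exists (cover_sentence e (S :\: I) I); split.
- exact: cover_sentence_closed.
- exact: nvars_cover_sentence.
- exact: holds_cover_sentence.
- have partS : I :|: S :\: I = S by rewrite -[RHS](setID S I) (setIidPr sIS).
  by move/(cover_sentence_K3 esym indI); rewrite partS; apply/negP.
Qed.

Theorem corollary3 (n : nat) : 4 <= n ->
  forall e : rel 'I_n, simple_graph e -> chi_gt e 3 ->
  exists k : nat, 4 * k <= 3 * n + 4 /\ W_le e k.
Proof.
move=> n4 e [esym _] /chi_gt3_not_col3 /large_independent_in_critical.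
move=> [S [I [nS sIS indI large]]].
exists #|S :\: I|.+1; split; last exact: W_le_independent.
have cardSI : #|S :\: I| = #|S| - #|I| by rewrite cardsD (setIidPr sIS).
have sizeS : #|S| <= n by rewrite -[n in _ <= n]card_ord max_card.
have sizeI : #|I| <= #|S| by apply: subset_leq_card.
rewrite cardSI; lia.
Qed.
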